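(* If $(r,s,0,0)\in\mu^{-1}(0)^{rss}$, i.e. $r\in\mathfrak{b}$ has pairwise distinct diagonal entries and $[r,s]\in\mathfrak{n}^+$, then $s$ is diagonal (its lower triangular representative in $\mathfrak{gl}_n/\mathfrak{n}^+$ has all strictly lower entries zero).
   Context: $\mathfrak{b}$: upper triangular complex $n\times n$ matrices; $\mathfrak{n}^+$: strictly upper triangular matrices; $\mathfrak{b}^*=\mathfrak{gl}_n/\mathfrak{n}^+$, identified with lower triangular matrices. $\mu(r,s,i,j)=[r,s]+ij\bmod\mathfrak{n}^+$ on $\mathfrak{b}\times\mathfrak{b}^*\times\mathbb{C}^n\times(\mathbb{C}^n)^*$, and $\mu^{-1}(0)^{rss}$ is the set of zeros of $\mu$ with $r$ having pairwise distinct diagonal entries. *)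

From mathcomp Require Import all_boot all_order all_algebra all_field.
Set Implicit Arguments. Unset Strict Implicit. Unset Printing Implicit Defensive.
Import GRing.Theory Num.Theory.
Local Open Scope ring_scope.

Definition upper_tri (n : nat) (A : 'M[algC]_n) : Prop :=
  forall i j : 'I_n, (j < i)%N -> A i j = 0.

(* lower triangular matrices: representatives of b^* = gl_n / n^+ *)
Definition lower_tri (n : nat) (A : 'M[algC]_n) : Prop :=
  forall i j : 'I_n, (i < j)%N -> A i j = 0.

Definition strictly_upper (n : nat) (A : 'M[algC]_n) : Prop :=
  forall i j : 'I_n, (j <= i)%N -> A i j = 0.

Definition comm_mx (n : nat) (r s : 'M[algC]_n) : 'M[algC]_n :=
  r *m s - s *m r.

Definition distinct_diag (n : nat) (r : 'M[algC]_n) : Prop :=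
  forall i j : 'I_n, i != j -> r i i != r j j.

(* the moment map mu(r,s,i,j) = [r,s] + i j  mod n^+, with i a column and j a row *)
Definition mu (n : nat) (r s : 'M[algC]_n) (iv : 'cV[algC]_n) (jv : 'rV[algC]_n)
  : 'M[algC]_n := comm_mx r s + iv *m jv.

Definition in_mu0_rss (n : nat) (r s : 'M[algC]_n) (iv : 'cV[algC]_n)
  (jv : 'rV[algC]_n) : Prop :=
  [/\ upper_tri r, lower_tri s, distinct_diag r & strictly_upper (mu r s iv jv)].

From mathcomp Require Import all_boot all_order all_algebra all_field.
From mathcomp Require Import zify.
Set Implicit Arguments. Unset Strict Implicit. Unset Printing Implicit Defensive.
Import GRing.Theory.
Local Open Scope ring_scope.

(* For j < i, the (i, j) entry of [r, s] with r upper triangular is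
   (r_ii - r_jj) s_ij plus terms involving only entries of s lying strictly
   further below the diagonal than (i, j).  Killing the entries of s diagonal
   by diagonal, starting from the corner (n-1, 0), the distinctness of the
   diagonal of r then forces every strictly lower entry of s to vanish. *)

Section UpperCommutator.

Variables (R : idomainType) (n : nat) (r s : 'M[R]_n).
Hypothesis r_upper : forall i j : 'I_n, (j < i)%N -> r i j = 0.

Lemma mulmx_upper_entry (i j : 'I_n) :
  (forall k : 'I_n, (i < k)%N -> s k j = 0) -> (r *m s) i j = r i i * s i j.
Proof.
move=> s0; rewrite mxE (bigD1 i) //= big1 ?addr0 // => k /eqP ne_ki.
by case: (ltngtP k i) => [/r_upper->|/s0->|/val_inj//]; rewrite ?mul0r ?mulr0.
Qed.

Lemma mulmx_upper_entry_r (i j : 'I_n) :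
  (forall k : 'I_n, (k < j)%N -> s i k = 0) -> (s *m r) i j = s i j * r j j.
Proof.
move=> s0; rewrite mxE (bigD1 j) //= big1 ?addr0 // => k /eqP ne_kj.
by case: (ltngtP k j) => [/s0->|/r_upper->|/val_inj//]; rewrite ?mul0r ?mulr0.
Qed.

Lemma commmx_upper_entry (i j : 'I_n) : (j < i)%N ->
  (forall k l : 'I_n, (l < k)%N -> (i - j < k - l)%N -> s k l = 0) ->
  (r *m s - s *m r) i j = (r i i - r j j) * s i j.
Proof.
move=> lt_ji s0; rewrite [LHS]mxE [(- (s *m r)) _ _]mxE.
rewrite mulmx_upper_entry ?mulmx_upper_entry_r ?mulrBl 1?[s i j * _]mulrC //.
  by move=> k lt_kj; apply: s0; lia.
by move=> k lt_ik; apply: s0; lia.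
Qed.

Hypothesis r_diag_uniq : forall i j : 'I_n, i != j -> r i i != r j j.
Hypothesis commmx_upper : forall i j : 'I_n, (j < i)%N -> (r *m s - s *m r) i j = 0.

Lemma commmx_upper_lower0 (i j : 'I_n) : (j < i)%N -> s i j = 0.
Proof.
suff: forall d (i j : 'I_n), (n - (i - j) <= d)%N -> (j < i)%N -> s i j = 0.
  by apply; apply: leqnn.
elim=> [|d IHd] {}i {}j le_gap lt_ji.
  by have := ltn_ord i; lia.
have /eqP := commmx_upper lt_ji.
rewrite commmx_upper_entry //; last first.
  by move=> k l lt_lk lt_gap; apply: IHd => //; have := ltn_ord k; lia.
rewrite mulf_eq0 subr_eq0 => /orP[/eqP eq_diag|/eqP //].
have ne_ij : i != j by rewrite neq_ltn lt_ji orbT.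
by have := r_diag_uniq ne_ij; rewrite eq_diag eqxx.
Qed.

End UpperCommutator.

Theorem mainTheorem15 (n : nat) (r s : 'M[algC]_n) :
  in_mu0_rss r s 0 0 ->
  forall i j : 'I_n, (j < i)%N -> s i j = 0.
Proof.
case=> r_upper _ r_diag_uniq mu_strictly_upper.
apply: (commmx_upper_lower0 r_upper r_diag_uniq) => i j lt_ji.
have := mu_strictly_upper i j (ltnW lt_ji).
by rewrite /mu mul0mx addr0; apply.
Qed.
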